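(* Let $\Gamma$ be a residually finite countable discrete group and $\Gamma_n\to e$. For $f\in1+pM_r(c_0(\Gamma,\mathbb{Z}_p))$ let $f^{(n)}\in1+pM_r(\mathbb{Z}_p\Gamma^{(n)})$ be its image, where $\Gamma^{(n)}=\Gamma/\Gamma_n$. Then \[ \log_p\det\nolimits_\Gamma f=\lim_{n\to\infty}\log_p\det\nolimits_{\Gamma^{(n)}}f^{(n)}\quad\text{in }\mathbb{Z}_p. \]
   Context: $\Gamma_n\to e$ means a sequence of normal subgroups of finite index in $\Gamma$ such that only the neutral element $e$ lies in infinitely many $\Gamma_n$. $c_0(\Gamma)$ is the $\mathbb{Q}_p$-algebra of formal series $\sum x_\gamma\gamma$, $x_\gamma\in\mathbb{Q}_p$, $|x_\gamma|_p\to0$ as $\gamma\to\infty$ (for each $\varepsilon>0$ only finitely many $|x_\gamma|_p\ge\varepsilon$), with convolution product and norm $\max|x_\gamma|_p$; $c_0(\Gamma,\mathbb{Z}_p)$ the subring of norm $\le1$ elements. For a normal subgroup $N$ the reduction $c_0(\Gamma)\to c_0(\Gamma/N)$, $\sum x_\gamma\gamma\mapsto\sum x_\gamma\,\gamma N$, is applied entrywise to matrices. $\mathrm{tr}_\Gamma:M_r(c_0(\Gamma))\to\mathbb{Q}_p$ sends $(f_{ij})$ to $\sum_i$(coefficient of $e$ in $f_{ii}$). For $u\in1+pM_r(c_0(\Gamma,\mathbb{Z}_p))$, $\log u=-\sum_{\nu\ge1}(1-u)^\nu/\nu$ and $\log_p\det_\Gamma u:=\mathrm{tr}_\Gamma(\log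 u)$ (same definition for the finite groups $\Gamma^{(n)}$). *)

From Stdlib Require Import ClassicalEpsilon.
From mathcomp Require Import all_boot all_algebra.
Unset Printing Implicit Defensive.
Import GRing.Theory Num.Theory.
Local Open Scope ring_scope.

(* p-adic integers Z_p = lim_k Z/p^k Z.  x : Zpad is the sequence of its *)
(* residues: x k is the representative in [0, p^k) of x mod p^k.       *)
Definition Zpad := nat -> int.

Section Padic.
Variable p : nat.

Definition pk (k : nat) : int := (p ^ k)%N%:Z.

Definition isZp (x : Zpad) : Prop :=
  forall k, (0 <= x k) /\ (x k < pk k) /\ (x k.+1 %% pk k)%Z = x k.

Definition zeroZp : Zpad := fun _ => 0.
Definition oneZp : Zpad := fun k => (1 %% pk k)%Z.
Definition natZp (n : nat) : Zpad := fun k => (n%:Z %% pk k)%Z.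
Definition addZp (x y : Zpad) : Zpad := fun k => ((x k + y k) %% pk k)%Z.
Definition oppZp (x : Zpad) : Zpad := fun k => ((- x k) %% pk k)%Z.
Definition subZp (x y : Zpad) : Zpad := addZp x (oppZp y).
Definition mulZp (x y : Zpad) : Zpad := fun k => ((x k * y k) %% pk k)%Z.

Definition invmod (u m : nat) : int := ((egcdz u%:Z m%:Z).1 %% m%:Z)%Z.

(* exact division x / nu in Z_p, for x in nu Z_p (nu >= 1):
   nu = p^v * u with p not dividing u; x/nu = (x / p^v) * u^{-1}. *)
Definition divZp (nu : nat) (x : Zpad) : Zpad := fun k =>
  let v := logn p nu in
  let u := (nu %/ p ^ v)%N in
  (((x (k + v)%N %/ pk v)%Z * invmod u (p ^ k)) %% pk k)%Z.

Definition padic_conv (a : nat -> Zpad) (L : Zpad) : Prop :=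
  forall k, exists N, forall n, (N <= n)%N -> a n k = L k.

Definition padic_lim (a : nat -> Zpad) : Zpad := fun k =>
  epsilon (inhabits 0) (fun v : int => exists N, forall n, (N <= n)%N -> a n k = v).

Definition padic_series (a : nat -> Zpad) : Zpad :=
  padic_lim (fun N => \big[addZp/zeroZp]_(n < N) a n).

End Padic.

(* Group data on a countable carrier.  gmem selects the actual group   *)
(* elements (used to realise quotient groups by canonical coset        *)
(* representatives inside the carrier of the big group).               *)
Record gdata := GData {
  gcar : countType;
  gmem : pred gcar;
  gmul : gcar -> gcar -> gcar;
  ginv : gcar -> gcar;
  gone : gcar }.

Definition is_group {T : Type} (mul : T -> T -> T) (inv : T -> T) (one : T) :=
  [/\ forall x y z, mul x (mul y z) = mul (mul x y) z,
      forall x, mul one x = x &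
      forall x, mul (inv x) x = one].

Definition normal_fi {T : eqType} (mul : T -> T -> T) (inv : T -> T) (one : T)
  (N : T -> bool) : Prop :=
  [/\ N one,
      forall x y, N x -> N y -> N (mul x y),
      forall x, N x -> N (inv x),
      forall g x, N x -> N (mul (mul (inv g) x) g) &
      exists s : seq T, forall x, exists2 a, a \in s & N (mul (inv a) x)].

Definition residually_finite {T : eqType} (mul : T -> T -> T) (inv : T -> T)
  (one : T) : Prop :=
  forall x, x <> one -> exists N, normal_fi mul inv one N /\ ~~ N x.

Definition tends_to_e {T : Type} (one : T) (Gn : nat -> T -> bool) : Prop :=
  forall x, x <> one -> exists M, forall n, (M <= n)%N -> ~~ Gn n x.

Section GroupAlgebra.
Variable p : nat.
Variable G : gdata.
Local Notation T := (gcar G).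

Definition padic_sum (F : T -> Zpad) : Zpad :=
  padic_series p (fun i => match @pickle_inv T i with
                           | Some x => if gmem G x then F x else zeroZp
                           | None => zeroZp end).

Definition c0Zp (a : T -> Zpad) : Prop :=
  (forall x, isZp p (a x)) /\
  (forall k, exists s : seq T, forall x, gmem G x -> x \notin s -> a x k = 0).

Definition conv (a b : T -> Zpad) : T -> Zpad := fun x =>
  padic_sum (fun y => mulZp p (a y) (b (gmul G (ginv G y) x))).

Variable r : nat.
Definition mat := 'I_r -> 'I_r -> T -> Zpad.

Definition oneM : mat := fun i j x =>
  if (i == j) && (x == gone G) then oneZp p else zeroZp.
Definition addM (A B : mat) : mat := fun i j x => addZp p (A i j x) (B i j x).
Definition subM (A B : mat) : mat := fun i j x => subZp p (A i j x) (B i j x).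
Definition scaleM (c : nat) (A : mat) : mat :=
  fun i j x => mulZp p (natZp p c) (A i j x).
Definition mulM (A B : mat) : mat := fun i j x =>
  \big[addZp p/zeroZp]_(l < r) conv (A i l) (B l j) x.
Definition powM (A : mat) (n : nat) : mat := iter n (mulM A) oneM.

Definition logM (u : mat) : mat := fun i j x =>
  oppZp p (padic_series p (fun n =>
     divZp p n.+1 (powM (subM oneM u) n.+1 i j x))).

Definition trG (A : mat) : Zpad :=
  \big[addZp p/zeroZp]_(i < r) A i i (gone G).

Definition logdet (u : mat) : Zpad := trG (logM u).

End GroupAlgebra.

(* Quotient group G / N, N a normal subgroup: each coset x N is        *)
(* represented by its element of least pickle code.                    *)
Section Quotient.
Variables (T : countType) (mul : T -> T -> T) (inv : T -> T) (one : T).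
Variable N : T -> bool.

Definition canon (x : T) : T :=
  head x [seq y <- pmap (@pickle_inv T) (iota 0 (pickle x).+1)
         | N (mul (inv x) y)].

Definition quotG : gdata :=
  GData T (fun x => canon x == x) (fun x y => canon (mul x y))
         (fun x => canon (inv x)) (canon one).

Definition reduce (p r : nat) (f : mat (GData T predT mul inv one) r) :
    mat quotG r :=
  fun i j C => padic_sum p (GData T predT mul inv one)
                 (fun x => if canon x == C then f i j x else zeroZp).

End Quotient.

From Pilot Require Import Defs.
From Stdlib Require Import ClassicalEpsilon FunctionalExtensionality PropExtensionality.
From mathcomp Require Import all_boot all_algebra zify.
Import GRing.Theory.

(* Everything is checked one p-adic digit at a time.  Write f = 1 - u with u in
   p M_r(c_0(Gamma, Z_p)).  Modulo p^K every entry of u has finite support, and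
   reduction c_0(Gamma) -> c_0(Gamma/Gamma_t) is multiplicative modulo p^K, so the
   trace of (u^(t))^m is the sum of the coefficients of u^m over Gamma_t.  Since
   Gamma_t -> e, for t large Gamma_t meets the finite support of u^m only in e, and
   the trace is the coefficient of e.  Finally u^m is divisible by p^m, so modulo
   p^k only the terms m < 2k of the logarithm series contribute. *)

Section IntMod.
Local Open Scope ring_scope.

Lemma modz_sum (I : Type) (s : seq I) (P : pred I) (F : I -> int) (d : int) :
  ((\sum_(i <- s | P i) (F i %% d)%Z) %% d)%Z = ((\sum_(i <- s | P i) F i) %% d)%Z.
Proof.
elim: s => [|i s IH]; first by rewrite !big_nil.
rewrite !big_cons; case: (P i) => //.
by rewrite -[in LHS]modzDmr IH modzDmr modzDml.
Qed.

Lemma eq_modz_sum (I : Type) (s : seq I) (P : pred I) (F G : I -> int) (d : int) :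
  (forall i, P i -> (F i %% d)%Z = (G i %% d)%Z) ->
  ((\sum_(i <- s | P i) F i) %% d)%Z = ((\sum_(i <- s | P i) G i) %% d)%Z.
Proof. by move=> FG; rewrite -modz_sum (eq_bigr _ FG) modz_sum. Qed.

Lemma modzBmr (x y d : int) : ((x - (y %% d)%Z) %% d)%Z = ((x - y) %% d)%Z.
Proof. by rewrite -modzDmr modzNm modzDmr. Qed.

Lemma dvdz_modz (d x m : int) : (d %| m)%Z -> (d %| x)%Z -> (d %| x %% m)%Z.
Proof.
move=> dm dx; have -> : (x %% m)%Z = x - (x %/ m)%Z * m.
  by rewrite {2}(divz_eq x m) addrAC subrr add0r.
by rewrite rpredB // dvdz_mull.
Qed.

Lemma pk_dvd p a b : (a <= b)%N -> (pk p a %| pk p b)%Z.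
Proof. by move=> ab; rewrite /pk /dvdz /=; exact: dvdn_exp2l. Qed.

Lemma pkD p a b : pk p (a + b) = pk p a * pk p b.
Proof. by rewrite /pk expnD PoszM. Qed.

Lemma sum_pred1_seq (T : eqType) (s : seq T) (x : T) (F : T -> int) :
  uniq s -> x \in s -> \sum_(y <- s | y == x) F y = F x.
Proof.
move=> us xs; rewrite (big_rem x) // eqxx big1_seq; first exact: Monoid.mulm1.
by move=> y /andP[/eqP-> ]; rewrite mem_rem_uniqF.
Qed.

Lemma eq_sum_supp (T : eqType) (s1 s2 : seq T) (P : pred T) (F : T -> int) :
  uniq s1 -> uniq s2 ->
  (forall x, P x -> x \notin s1 -> F x = 0) ->
  (forall x, P x -> x \notin s2 -> F x = 0) ->
  \sum_(x <- s1 | P x) F x = \sum_(x <- s2 | P x) F x.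
Proof.
have restrict (s s' : seq T) : (forall x, P x -> x \notin s' -> F x = 0) ->
    \sum_(x <- s | P x) F x = \sum_(x <- filter (mem s') s | P x) F x.
  move=> F0; rewrite big_filter_cond big_mkcond [RHS]big_mkcond.
  apply: eq_bigr => x _; case Px: (P x); rewrite ?andbT ?andbF //.
  by case: ifP => // /negbT xn; rewrite F0.
move=> u1 u2 F1 F2; rewrite (restrict s1 s2) // (restrict s2 s1) //.
apply: perm_big; apply: uniq_perm; rewrite ?filter_uniq // => x.
by rewrite !mem_filter andbC.
Qed.

End IntMod.

Section PadicSums.
Local Open Scope ring_scope.
Variable p : nat.

Lemma big_addZpE k (I : Type) (s : seq I) (P : pred I) (F : I -> Zpad) :
  (\big[addZp p/zeroZp]_(i <- s | P i) F i) k = ((\sum_(i <- s | P i) F i k) %% pk p k)%Z.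
Proof.
elim: s => [|i s IH]; first by rewrite !big_nil /zeroZp mod0z.
by rewrite !big_cons; case: (P i); rewrite //= /addZp IH modzDmr.
Qed.

Lemma padic_limE (a : nat -> Zpad) k v N :
  (forall n, (N <= n)%N -> a n k = v) -> padic_lim a k = v.
Proof.
move=> aN; rewrite /padic_lim.
have : exists v0, exists N, forall n, (N <= n)%N -> a n k = v0 by exists v, N.
move=> /(epsilon_spec (inhabits 0)) [N' aN'].
by rewrite -(aN' (maxn N N')) ?leq_maxr // aN // leq_maxl.
Qed.

Lemma padic_series_finE (a : nat -> Zpad) k N :
  (forall n, (N <= n)%N -> a n k = 0) ->
  padic_series p a k = ((\sum_(n < N) a n k) %% pk p k)%Z.
Proof.
move=> a0; apply: (@padic_limE _ _ _ N) => n Nn; rewrite big_addZpE; congr (_ %% _)%Z.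
rewrite -(big_mkord xpredT (fun i => a i k)) (@big_cat_nat _ _ _ N 0 n) //=.
rewrite [X in _ + X]big1_seq ?addr0 ?big_mkord // => i /andP[_].
by rewrite mem_index_iota => /andP[Ni _]; apply: a0.
Qed.

Lemma eq_padic_series (a b : nat -> Zpad) k :
  (forall n, a n k = b n k) -> padic_series p a k = padic_series p b k.
Proof.
move=> ab; rewrite /padic_series /padic_lim; congr (epsilon _ _).
apply: functional_extensionality => v; apply: propositional_extensionality.
have partial N : (\big[addZp p/zeroZp]_(n < N) a n) k = (\big[addZp p/zeroZp]_(n < N) b n) k.
  by rewrite !big_addZpE; congr (_ %% _)%Z; apply: eq_bigr.
by split=> -[N HN]; exists N => n /HN; rewrite partial.
Qed.

Lemma padic_sum_finE (G : gdata) (F : gcar G -> Zpad) k (s : seq (gcar G)) :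
  uniq s -> (forall x, gmem G x -> x \notin s -> F x k = 0) ->
  padic_sum p G F k = ((\sum_(x <- s | gmem G x) F x k) %% pk p k)%Z.
Proof.
move=> us Fs; rewrite /padic_sum.
set N := (\sum_(x <- s) (pickle x).+1)%N.
have Nx x : x \in s -> (pickle x < N)%N by move=> xs; rewrite /N (big_rem x) //= leq_addr.
rewrite (@padic_series_finE _ _ N); last first.
  move=> n Nn; case E: (pickle_inv n) => [x|] //.
  have px := @pickle_invK (gcar G) n; rewrite E /= in px.
  case: ifP => // gx; apply: Fs => //; apply/negP => /Nx.
  by rewrite px ltnNge Nn.
congr (_ %% _)%Z.
transitivity (\sum_(n < N) \sum_(x <- s | gmem G x && (pickle x == n)) F x k).
  apply: eq_bigr => n _; case E: (pickle_inv n) => [x|]; last first.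
    rewrite big1_seq // => y /andP[/andP[_ /eqP py] _].
    by move: (pickleK_inv y); rewrite py E.
  have px := @pickle_invK (gcar G) n; rewrite E /= in px.
  rewrite (eq_bigl (fun y => gmem G y && (y == x))); last first.
    move=> y; congr (_ && _); rewrite -px; apply/eqP/eqP => [e|->//].
    exact: (pcan_inj (@pickleK_inv _)).
  rewrite -big_filter_cond; case: (boolP (x \in s)) => xs.
    case gx: (gmem G x); first by rewrite sum_pred1_seq ?filter_uniq // mem_filter gx.
    by rewrite big1_seq // => y /andP[/eqP-> ]; rewrite mem_filter gx.
  rewrite big1_seq; last by move=> y /andP[/eqP-> ]; rewrite mem_filter (negPf xs) andbF.
  by case: ifP => // gx; rewrite Fs.
rewrite (exchange_big_dep (gmem G)) /=; last by move=> n x _ /andP[].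
rewrite big_seq_cond [RHS]big_seq_cond; apply: eq_bigr => x /andP[xs gx].
rewrite (bigD1 (Ordinal (Nx _ xs))) /=; last by rewrite gx eqxx.
rewrite big1 ?addr0 // => i /andP[/andP[_ /eqP pi] ni]; case/eqP: ni.
by apply: val_inj; rewrite /= pi.
Qed.

End PadicSums.

Section Group.
Local Set Implicit Arguments.
Local Unset Strict Implicit.
Variables (T : countType) (mul : T -> T -> T) (inv : T -> T) (one : T).
Hypothesis Hg : is_group mul inv one.

Lemma gmulA x y z : mul x (mul y z) = mul (mul x y) z.
Proof. by case: Hg. Qed.

Lemma gmul1 x : mul one x = x.
Proof. by case: Hg. Qed.

Lemma gmulVx x : mul (inv x) x = one.
Proof. by case: Hg. Qed.

Lemma gmulI x : injective (mul x).
Proof. by move=> y z e; rewrite -(gmul1 y) -(gmul1 z) -(gmulVx x) -!gmulA e. Qed.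

Lemma gmulxV x : mul x (inv x) = one.
Proof.
rewrite -[LHS]gmul1 -(gmulVx (inv x)) -gmulA [mul (inv x) (mul x _)]gmulA gmulVx.
by rewrite gmul1 gmulVx.
Qed.

Lemma gmulx1 x : mul x one = x.
Proof. by rewrite -(gmulVx x) gmulA gmulxV gmul1. Qed.

Lemma gmulKV x y : mul (inv x) (mul x y) = y.
Proof. by rewrite gmulA gmulVx gmul1. Qed.

Lemma gmulVK x y : mul x (mul (inv x) y) = y.
Proof. by rewrite gmulA gmulxV gmul1. Qed.

Lemma ginvK x : inv (inv x) = x.
Proof. by apply: (@gmulI (inv x)); rewrite gmulVx gmulxV. Qed.

Lemma ginvM x y : inv (mul x y) = mul (inv y) (inv x).
Proof. by apply: (@gmulI (mul x y)); rewrite gmulxV -gmulA gmulVK gmulxV. Qed.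

Variable N : T -> bool.
Hypothesis HN : normal_fi mul inv one N.

Lemma normal1 : N one. Proof. by case: HN. Qed.
Lemma normalM x y : N x -> N y -> N (mul x y). Proof. case: HN => _ h _ _ _; exact: h. Qed.
Lemma normalV x : N x -> N (inv x). Proof. case: HN => _ _ h _ _; exact: h. Qed.
Lemma normalJ g x : N x -> N (mul (mul (inv g) x) g). Proof. case: HN => _ _ _ h _; exact: h. Qed.

Local Notation coset x y := (N (mul (inv x) y)).

Lemma coset_refl x : coset x x.
Proof. by rewrite gmulVx normal1. Qed.

Lemma coset_sym x y : coset x y -> coset y x.
Proof. by move/normalV; rewrite ginvM ginvK. Qed.

Lemma coset_trans x y z : coset x y -> coset y z -> coset x z.
Proof. by move=> xy /(normalM xy); rewrite -gmulA gmulVK. Qed.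

Lemma coset_inv x y : coset x y -> coset (inv x) (inv y).
Proof.
move=> /normalV/(normalJ (inv x)); rewrite !ginvK ginvM ginvK !gmulA.
by rewrite -[mul (mul _ x) (inv x)]gmulA gmulxV gmulx1.
Qed.

Lemma coset_mulr x y z : coset x y -> coset (mul x z) (mul y z).
Proof. by move/(normalJ z); rewrite ginvM !gmulA. Qed.

Local Notation canon := (Defs.canon T mul inv N).

Lemma coset_canon x : coset x (canon x).
Proof.
rewrite /canon; case E: (filter _ _) => [|y t] /=; first exact: coset_refl.
have : y \in y :: t by rewrite mem_head.
by rewrite -E mem_filter => /andP[].
Qed.

Lemma mem_pickle_iota x n :
  (x \in pmap (@pickle_inv T) (iota 0 n)) = (pickle x < n)%N.
Proof.
rewrite mem_pmap; apply/mapP/idP => [[i]|xn].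
  rewrite mem_iota add0n => /andP[_ i_n] e.
  by have := @pickle_invK T i; rewrite -e /= => ->.
by exists (pickle x); rewrite ?mem_iota ?add0n // pickleK_inv.
Qed.

(* canon x is the first element of the coset of x in the enumeration, so any long enough
   prefix of the enumeration finds it. *)
Lemma head_filter_pickle_prefix (P : pred T) x0 x1 n n' z :
  (n <= n')%N -> (pickle z < n)%N -> P z ->
  head x0 (filter P (pmap (@pickle_inv T) (iota 0 n))) =
  head x1 (filter P (pmap (@pickle_inv T) (iota 0 n'))).
Proof.
move=> nn' zn Pz; rewrite -(subnKC nn') iotaD pmap_cat filter_cat.
case E: (filter P _) => [|y t] //=.
have : z \in filter P (pmap (@pickle_inv T) (iota 0 n)).
  by rewrite mem_filter Pz mem_pickle_iota.
by rewrite E.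
Qed.

Lemma canon_coset x y : coset x y -> canon x = canon y.
Proof.
move=> xy; rewrite /canon.
rewrite (@eq_filter _ (fun z => coset y z) (fun z => coset x z)); last first.
  move=> z; apply/idP/idP; first exact: coset_trans.
  exact: coset_trans (coset_sym xy).
set m := maxn (pickle x).+1 (pickle y).+1.
rewrite (@head_filter_pickle_prefix _ x x _ m x) ?leq_maxl ?coset_refl //.
by rewrite (@head_filter_pickle_prefix _ y x _ m y) ?leq_maxr.
Qed.

Lemma canon_eq_coset x y : canon x = canon y -> coset x y.
Proof.
move=> e; apply: coset_trans (coset_canon x) _; rewrite e.
exact: coset_sym (coset_canon y).
Qed.

Lemma canon_id x : canon (canon x) = canon x.
Proof. by symmetry; apply/canon_coset/coset_canon. Qed.

Lemma canon_mul_eq x z C : canon C = C ->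
  (canon (mul x z) == C) = (canon z == canon (mul (canon (inv (canon x))) C)).
Proof.
move=> cC.
have -> : canon (mul (canon (inv (canon x))) C) = canon (mul (inv x) C).
  apply/canon_coset/coset_sym/coset_mulr.
  exact/(coset_trans _ (coset_canon (inv (canon x))))/coset_inv/coset_canon.
apply/eqP/eqP => [e|/canon_eq_coset zC].
  by apply/canon_coset; have := canon_eq_coset (etrans e (esym cC)); rewrite ginvM gmulA.
by rewrite -cC; apply/canon_coset; move: zC; rewrite gmulA -ginvM.
Qed.

End Group.

Section Reduction.
Local Set Implicit Arguments.
Local Unset Strict Implicit.
Local Open Scope ring_scope.
Variables (p K : nat).
Variables (T : countType) (mul : T -> T -> T) (inv : T -> T) (one : T).
Hypothesis Hg : is_group mul inv one.
Variable N : T -> bool.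
Hypothesis HN : normal_fi mul inv one N.

Local Notation M := (pk p K).
Local Notation Gam := (GData T predT mul inv one).
Local Notation Q := (quotG T mul inv one N).
Local Notation canon := (Defs.canon T mul inv N).

Definition reduce_coef (a : T -> Zpad) : T -> Zpad := fun C =>
  padic_sum p Gam (fun x => if canon x == C then a x else zeroZp).

Definition supp (s : seq T) (a : T -> Zpad) := forall x, x \notin s -> a x K = 0.

Definition prods (sa sb : seq T) := undup [seq mul y z | y <- sa, z <- sb].

Lemma conv_finE (a b : T -> Zpad) sa x : uniq sa -> supp sa a ->
  conv p Gam a b x K = ((\sum_(y <- sa) ((a y K * b (mul (inv y) x) K) %% M)%Z) %% M)%Z.
Proof.
move=> us sa_a; rewrite /conv (@padic_sum_finE p Gam _ K sa) //= => y _ yn.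
by rewrite /mulZp sa_a // mul0r mod0z.
Qed.

Lemma convQ_finE (a b : T -> Zpad) sq C : uniq sq ->
  (forall y, canon y == y -> y \notin sq -> a y K = 0) ->
  conv p Q a b C K = ((\sum_(y <- sq | canon y == y)
     ((a y K * b (canon (mul (canon (inv y)) C)) K) %% M)%Z) %% M)%Z.
Proof.
move=> us sq_a; rewrite /conv (@padic_sum_finE p Q _ K sq) //= => y yr yn.
by rewrite /mulZp sq_a // mul0r mod0z.
Qed.

Lemma reduce_coef_finE (a : T -> Zpad) s C : uniq s -> supp s a ->
  reduce_coef a C K = ((\sum_(x <- s) (if canon x == C then a x K else 0)) %% M)%Z.
Proof.
move=> us sa; rewrite /reduce_coef (@padic_sum_finE p Gam _ K s) //=.
  by congr (_ %% _)%Z; apply: eq_bigr => x _; case: ifP.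
by move=> x _ xn; case: ifP => // _; rewrite sa.
Qed.

Lemma conv_supp (a b : T -> Zpad) sa sb : uniq sa -> supp sa a -> supp sb b ->
  supp (prods sa sb) (conv p Gam a b).
Proof.
move=> us sa_a sb_b x xn; rewrite (conv_finE _ _ us sa_a) big1_seq ?mod0z // => y /andP[_ ys].
rewrite sb_b ?mulr0 ?mod0z //; apply: contra xn => zs.
by rewrite mem_undup; apply/allpairsP; exists (y, mul (inv y) x); rewrite /= (gmulVK Hg).
Qed.

Lemma sum_by_cosets (sa : seq T) (F h : T -> int) :
  \sum_(y <- undup (map canon sa) | canon y == y)
     (\sum_(x <- sa) (if canon x == y then F x else 0)) * h y =
  \sum_(x <- sa) F x * h (canon x).
Proof.
transitivity (\sum_(y <- undup (map canon sa) | canon y == y)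
    \sum_(x <- sa) (if canon x == y then F x * h y else 0)).
  apply: eq_bigr => y _; rewrite big_distrl /=; apply: eq_bigr => x _.
  by case: ifP; rewrite ?mul0r.
rewrite exchange_big /=; apply: eq_big_seq => x xs.
transitivity (\sum_(y <- undup (map canon sa) | y == canon x) F x * h y).
  rewrite big_mkcond [RHS]big_mkcond; apply: eq_bigr => y _.
  case: (eqVneq y (canon x)) => [->|ne]; first by rewrite (canon_id Hg HN) !eqxx.
  by case: ifP => // _; rewrite eq_sym (negPf ne).
by rewrite sum_pred1_seq ?undup_uniq // mem_undup map_f.
Qed.

(* Translating by x identifies the part of the coset C inside x sb with x times a coset. *)
Lemma sum_coset_translate (b : T -> int) sa sb x C :
  uniq sb -> (forall z, z \notin sb -> b z = 0) -> x \in sa -> canon C = C ->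
  \sum_(w <- prods sa sb) (if canon w == C then b (mul (inv x) w) else 0) =
  \sum_(z <- sb) (if canon z == canon (mul (canon (inv (canon x))) C) then b z else 0).
Proof.
move=> usb sb_b xs cC.
rewrite (@eq_sum_supp _ _ (map (mul x) sb) xpredT) ?undup_uniq ?(map_inj_uniq (@gmulI _ _ _ _ Hg x)) //.
- by rewrite big_map; apply: eq_bigr => z _; rewrite (gmulKV Hg) (canon_mul_eq Hg HN).
- move=> w _ wn; case: ifP => // _; apply: sb_b; apply: contra wn => zs.
  by rewrite mem_undup; apply/allpairsP; exists (x, mul (inv x) w); rewrite /= (gmulVK Hg).
- move=> w _ wn; case: ifP => // _; apply: sb_b; apply: contra wn => zs.
  by apply/mapP; exists (mul (inv x) w); rewrite ?(gmulVK Hg).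
Qed.

Lemma reduce_conv (a b a' b' : T -> Zpad) sa sb C :
  uniq sa -> uniq sb -> supp sa a -> supp sb b ->
  (forall y, canon y == y -> a' y K = reduce_coef a y K) ->
  (forall y, canon y == y -> b' y K = reduce_coef b y K) ->
  canon C = C ->
  conv p Q a' b' C K = reduce_coef (conv p Gam a b) C K.
Proof.
move=> usa usb sa_a sb_b a'E b'E cC.
set U := undup (map canon sa).
have U_a' y : canon y == y -> y \notin U -> a' y K = 0.
  move=> cy yn; rewrite a'E // (reduce_coef_finE _ usa sa_a) big1_seq ?mod0z // => x /andP[_ xs].
  by case: ifP => // /eqP e; case/negP: yn; rewrite mem_undup -e map_f.
rewrite (convQ_finE _ _ (undup_uniq _) U_a') modz_sum.
rewrite (reduce_coef_finE _ (undup_uniq _) (conv_supp usa sa_a sb_b)).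
set Sb := fun d => \sum_(z <- sb) (if canon z == d then b z K else 0).
transitivity ((\sum_(x <- sa) a x K * Sb (canon (mul (canon (inv (canon x))) C))) %% M)%Z.
  rewrite -(sum_by_cosets sa (fun x => a x K) (fun y => Sb (canon (mul (canon (inv y)) C)))).
  apply: eq_modz_sum => y cy.
  rewrite a'E // b'E ?(canon_id Hg HN) // (reduce_coef_finE _ usa sa_a).
  by rewrite (reduce_coef_finE _ usb sb_b) modzMm.
transitivity ((\sum_(w <- prods sa sb) (if canon w == C then
     \sum_(x <- sa) a x K * b (mul (inv x) w) K else 0)) %% M)%Z; last first.
  apply: eq_modz_sum => w _; case: ifP => // _.
  by rewrite (conv_finE _ _ usa sa_a) modz_mod modz_sum.
congr (_ %% _)%Z; symmetry.
transitivity (\sum_(w <- prods sa sb) \sum_(x <- sa)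
    (if canon w == C then a x K * b (mul (inv x) w) K else 0)).
  by apply: eq_bigr => w _; case: ifP => // _; rewrite big1.
rewrite exchange_big /=; apply: eq_big_seq => x xs.
rewrite /Sb -(@sum_coset_translate (fun z => b z K) sa sb x C usb _ xs cC) // big_distrr /=.
by apply: eq_bigr => w _; case: ifP; rewrite ?mulr0.
Qed.

End Reduction.

Section MatrixReduction.
Local Set Implicit Arguments.
Local Unset Strict Implicit.
Local Open Scope ring_scope.
Variables (p K : nat).
Variables (T : countType) (mul : T -> T -> T) (inv : T -> T) (one : T).
Hypothesis Hg : is_group mul inv one.
Variable N : T -> bool.
Hypothesis HN : normal_fi mul inv one N.
Variable r : nat.

Local Notation M := (pk p K).
Local Notation Gam := (GData T predT mul inv one).
Local Notation Q := (quotG T mul inv one N).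
Local Notation canon := (Defs.canon T mul inv N).
Local Notation supp := (supp K).
Local Notation reduce_coef := (reduce_coef p mul inv one N).

Definition msupp (s : seq T) (A : mat Gam r) := forall i j, supp s (A i j).

(* Elements of the quotient are the canonical coset representatives; other points are junk. *)
Definition reduces_to (A : mat Gam r) (A' : mat Q r) :=
  forall i j y, canon y == y -> A' i j y K = reduce_coef (A i j) y K.

Lemma mulM_supp (A B : mat Gam r) s s' : uniq s -> msupp s A -> msupp s' B ->
  msupp (prods mul s s') (mulM p Gam r A B).
Proof.
move=> us sA s'B i j x xn; rewrite /mulM big_addZpE big1 ?mod0z // => l _.
exact: (conv_supp p Hg us (sA i l) (s'B l j)).
Qed.

Lemma reduce_mulM (A B : mat Gam r) (A' B' : mat Q r) s s' :
  uniq s -> uniq s' -> msupp s A -> msupp s' B ->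
  reduces_to A A' -> reduces_to B B' -> reduces_to (mulM p Gam r A B) (mulM p Q r A' B').
Proof.
move=> us us' sA s'B AA' BB' i j C /eqP cC.
rewrite /mulM big_addZpE (reduce_coef_finE p mul inv one N C (undup_uniq _) (mulM_supp us sA s'B i j)).
transitivity ((\sum_(l < r) reduce_coef (conv p Gam (A i l) (B l j)) C K) %% M)%Z.
  congr (_ %% _)%Z; apply: eq_bigr => l _.
  by apply: (reduce_conv Hg HN us us' (sA i l) (s'B l j)) => // y; [apply: AA' | apply: BB'].
transitivity ((\sum_(l < r) \sum_(x <- prods mul s s')
   (if canon x == C then conv p Gam (A i l) (B l j) x K else 0)) %% M)%Z.
  apply: eq_modz_sum => l _.
  by rewrite (reduce_coef_finE p mul inv one N C (undup_uniq _) (conv_supp p Hg us (sA i l) (s'B l j))) modz_mod.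
rewrite exchange_big /=; apply: eq_modz_sum => x _.
case: ifP => _; last by rewrite big1.
by rewrite /mulM big_addZpE modz_mod.
Qed.

Lemma reduce_oneM : reduces_to (oneM p Gam r) (oneM p Q r).
Proof.
move=> i j C cC; rewrite (@reduce_coef_finE p K T mul inv one N _ [:: one]) //; last first.
  by move=> x; rewrite inE /oneM => /negPf->; rewrite andbF.
rewrite big_seq1 /oneM /= eqxx andbT (eq_sym C).
by case: (i == j); case: (canon one == C); rewrite /oneZp /zeroZp ?modz_mod ?mod0z.
Qed.

Lemma reduce_coef_sub (a b : T -> Zpad) s C : uniq s -> supp s a -> supp s b ->
  reduce_coef (fun x => subZp p (a x) (b x)) C K =
  subZp p (reduce_coef a C) (reduce_coef b C) K.
Proof.
move=> us sa sb.
have sab : supp s (fun x => subZp p (a x) (b x)).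
  by move=> x xn; rewrite /subZp /addZp /oppZp sa // sb // oppr0 mod0z add0r mod0z.
rewrite /subZp /addZp /oppZp !(reduce_coef_finE p mul inv one N C us) //.
rewrite [RHS]modzDmr [RHS]modzDml modzBmr.
transitivity ((\sum_(x <- s) (if canon x == C then a x K - b x K else 0)) %% M)%Z.
  by apply: eq_modz_sum => x _; case: ifP => _; rewrite ?modz_mod ?modzDmr.
congr (_ %% _)%Z; rewrite -sumrN -big_split /=; apply: eq_bigr => x _.
by case: ifP; rewrite ?oppr0 ?addr0.
Qed.

Fixpoint spow (s : seq T) (m : nat) : seq T :=
  if m is m'.+1 then prods mul s (spow s m') else [:: one].

Lemma spow_uniq s m : uniq (spow s m).
Proof. by case: m => [|m] //=; rewrite undup_uniq. Qed.

Lemma powM_supp (A : mat Gam r) s : uniq s -> msupp s A ->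
  forall m, msupp (spow s m) (powM p Gam r A m).
Proof.
move=> us sA; elim=> [|m IH] /=; last exact: mulM_supp.
by move=> i j x; rewrite inE /powM /= /oneM => /negPf->; rewrite andbF.
Qed.

Lemma reduce_powM (A : mat Gam r) (A' : mat Q r) s : uniq s -> msupp s A ->
  reduces_to A A' -> forall m, reduces_to (powM p Gam r A m) (powM p Q r A' m).
Proof.
move=> us sA AA'; elim=> [|m IH]; first exact: reduce_oneM.
exact: (reduce_mulM us (spow_uniq s m) sA (powM_supp (m := m) us sA) AA' IH).
Qed.

Lemma reduce_coef_vanish (h : T -> Zpad) C :
  (forall x, h x K = 0) -> reduce_coef h C K = 0.
Proof. by move=> h0; rewrite (@reduce_coef_finE p K T mul inv one N h [::]) ?big_nil ?mod0z. Qed.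

Lemma reduce_coef_one (h : T -> Zpad) s : uniq s -> supp s h ->
  (h one K %% M)%Z = h one K -> (forall x, x \in s -> x != one -> ~~ N x) ->
  reduce_coef h (canon one) K = h one K.
Proof.
move=> us sh hM sN; rewrite (reduce_coef_finE p mul inv one N _ us sh).
have canon_one x : x \in s -> (canon x == canon one) = (x == one).
  move=> xs; case: (eqVneq x one) => [->|x1]; first by rewrite eqxx.
  apply/negbTE/negP => /eqP /(canon_eq_coset Hg HN); rewrite (gmulx1 Hg) => /(normalV HN).
  by rewrite (ginvK Hg); apply/negP; apply: sN.
rewrite -big_mkcond /= big_seq_cond.
rewrite (eq_bigl (fun x => (x \in s) && (x == one))); last first.
  by move=> x /=; case: (boolP (x \in s)) => xs //=; rewrite canon_one.
rewrite -big_seq_cond; case: (boolP (one \in s)) => os; first by rewrite sum_pred1_seq.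
rewrite big1_seq ?mod0z; first by rewrite sh.
by move=> x /andP[/eqP-> ]; rewrite (negPf os).
Qed.

Lemma powM_dvd (A : mat Gam r) s : uniq s -> msupp s A ->
  (forall i j x, (pk p (minn 1 K) %| A i j x K)%Z) ->
  forall m i j x, (pk p (minn m K) %| powM p Gam r A m i j x K)%Z.
Proof.
move=> us sA pA; elim=> [|m IH] i j x; first by rewrite min0n /pk expn0 dvd1z.
have dM : (pk p (minn m.+1 K) %| M)%Z by apply: pk_dvd; exact: geq_minr.
rewrite /powM /= /mulM big_addZpE; apply: dvdz_modz => //.
apply: rpred_sum => l _; rewrite (conv_finE _ _ _ us (sA i l)).
apply: dvdz_modz => //; apply: rpred_sum => y _; apply: dvdz_modz => //.
apply: dvdz_trans (dvdz_mul (pA i l y) (IH l j (mul (inv y) x))).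
by rewrite -pkD; apply: pk_dvd; lia.
Qed.

End MatrixReduction.

Lemma double_leq_exp2 v : (2 * v <= 2 ^ v)%N.
Proof. by case: v => [|v] //; rewrite expnS leq_mul2l /= ltn_expl. Qed.

Lemma add_logn_leq p k m : prime p -> (2 * k <= m)%N -> (k + logn p m <= m)%N.
Proof.
move=> pp km; case: (posnP m) => [m0|m0].
  by move: km; rewrite m0 leqn0 muln_eq0 /= => /eqP->; rewrite logn0.
have h1 : (p ^ logn p m <= m)%N by apply: dvdn_leq => //; exact: pfactor_dvdnn.
have h2 : (2 ^ logn p m <= p ^ logn p m)%N by case: (posnP (logn p m)) => [->|v0] //; rewrite leq_exp2r // prime_gt1.
have := double_leq_exp2 (logn p m); lia.
Qed.

Lemma uniform_bound_lt (P : nat -> nat -> Prop) :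
  (forall n B B', (B <= B')%N -> P n B -> P n B') ->
  (forall n, exists B, P n B) -> forall m, exists B, forall n, (n < m)%N -> P n B.
Proof.
move=> mono ex; elim=> [|m [B HB]]; first by exists 0%N.
have [B' HB'] := ex m; exists (maxn B B') => n.
rewrite ltnS leq_eqVlt => /orP[/eqP->|nm]; first exact: mono (leq_maxr _ _) HB'.
exact: mono (leq_maxl _ _) (HB n nm).
Qed.

Lemma tends_to_e_seq {T : eqType} {one : T} {Gn : nat -> T -> bool} (s : seq T) :
  tends_to_e one Gn ->
  exists B, forall x, x \in s -> x <> one -> forall t, (B <= t)%N -> ~~ Gn t x.
Proof.
move=> Gn_e; elim: s => [|y s [B HB]]; first by exists 0%N.
case: (eqVneq y one) => [->|/eqP /Gn_e [By HBy]].
  by exists B => x; rewrite inE => /orP[/eqP->|/HB] //.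
exists (maxn By B) => x; rewrite inE => /orP[/eqP-> _|/HB xB x1] t t_ge.
  by apply: HBy; apply: leq_trans t_ge; apply: leq_maxl.
by apply: xB => //; apply: leq_trans t_ge; apply: leq_maxr.
Qed.

Section Approximation.
Local Open Scope ring_scope.
Variables (p : nat) (T : countType) (mul : T -> T -> T) (inv : T -> T) (one : T).
Hypotheses (p_prime : prime p) (Hg : is_group mul inv one).
Variable Gn : nat -> T -> bool.
Hypotheses (HGn : forall t, normal_fi mul inv one (Gn t)) (Gn_e : tends_to_e one Gn).
Variables (r : nat) (su : nat -> seq T).
Hypothesis su_uniq : forall K, uniq (su K).

Local Notation Gam := (GData T predT mul inv one).
Local Notation Q t := (quotG T mul inv one (Gn t)).
Local Notation canon t := (Defs.canon T mul inv (Gn t)).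

Variables (u : mat Gam r) (uQ : forall t, mat (Q t) r).
Hypotheses (u_supp : forall K, msupp K (su K) u)
  (u_dvd : forall K i j x, (pk p (minn 1 K) %| u i j x K)%Z)
  (u_reduce : forall K (t : nat), reduces_to p K u (uQ t)).

Lemma powM_modE m i j x K :
  (powM p Gam r u m.+1 i j x K %% pk p K)%Z = powM p Gam r u m.+1 i j x K.
Proof. by rewrite /powM /= /mulM big_addZpE modz_mod. Qed.

Lemma powM_reduce_one_eventually K m : exists B, forall t, (B <= t)%N ->
  forall i j, powM p (Q t) r (uQ t) m.+1 i j (canon t one) K =
              powM p Gam r u m.+1 i j one K.
Proof.
have [B HB] := tends_to_e_seq (spow mul one (su K) m.+1) Gn_e.
exists B => t tB i j.
rewrite (reduce_powM Hg (HGn t) (su_uniq K) (u_supp K) (u_reduce K t)); last first.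
  by rewrite (canon_id Hg).
apply: (reduce_coef_one Hg (HGn t) (spow_uniq mul one _ _) _ (powM_modE _ _ _ _ _)).
  exact: (powM_supp p Hg (su_uniq K) (u_supp K)).
by move=> x xs /eqP x1; apply: HB.
Qed.

Lemma powM_vanish K m i j x : (K <= m.+1)%N -> powM p Gam r u m.+1 i j x K = 0.
Proof.
move=> Km; have := powM_dvd (su_uniq K) (u_supp K) (u_dvd K) m.+1 i j x.
by rewrite (minn_idPr Km) => /dvdz_mod0P; rewrite powM_modE.
Qed.

Lemma powM_reduce_vanish K m t i j C : (K <= m.+1)%N ->
  canon t C == C -> powM p (Q t) r (uQ t) m.+1 i j C K = 0.
Proof.
move=> Km cC; rewrite (reduce_powM Hg (HGn t) (su_uniq K) (u_supp K) (u_reduce K t)) //.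
by apply: reduce_coef_vanish => x; apply: powM_vanish.
Qed.

(* Modulo p^k, the term (1 - f)^(n+1)/(n+1) only reads precision k + v_p(n+1); once
   n+1 >= 2k this is at most n+1, where p^(n+1) kills both powers, so only the
   finitely many n < 2k need a bound on t. *)
Lemma log_terms_eventually k : exists B, forall t, (B <= t)%N -> forall i n,
  divZp p n.+1 (powM p (Q t) r (uQ t) n.+1 i i (canon t one)) k =
  divZp p n.+1 (powM p Gam r u n.+1 i i one) k.
Proof.
pose Kn n := (k + logn p n.+1)%N.
have [B HB] := uniform_bound_lt (fun n B => forall t, (B <= t)%N -> forall i j,
    powM p (Q t) r (uQ t) n.+1 i j (canon t one) (Kn n) = powM p Gam r u n.+1 i j one (Kn n))
  (fun n B B' BB' H t tB => H t (leq_trans BB' tB))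
  (fun n => powM_reduce_one_eventually (Kn n) n) (2 * k).
exists B => t tB i n; rewrite /divZp; congr ((_ * _) %% _)%Z; congr (_ %/ _)%Z.
case: (ltnP n (2 * k)) => nk; first exact: HB.
have Kn_le : (Kn n <= n.+1)%N by apply: add_logn_leq => //; lia.
by rewrite powM_vanish // powM_reduce_vanish // (canon_id Hg).
Qed.

End Approximation.

Arguments log_terms_eventually {p T mul inv one} p_prime Hg {Gn} HGn Gn_e {r su}
  su_uniq {u uQ} u_supp u_dvd u_reduce k.

Section OneAddP.
Local Set Implicit Arguments.
Local Unset Strict Implicit.
Local Open Scope ring_scope.
Variables (p : nat) (T : countType) (mul : T -> T -> T) (inv : T -> T) (one : T).
Variable r : nat.

Local Notation Gam := (GData T predT mul inv one).
Local Notation oneG := (oneM p Gam r).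

Lemma c0Zp_msupp_exists (g : mat Gam r) : (forall i j, c0Zp p Gam (g i j)) ->
  exists su : nat -> seq T, forall K, [/\ uniq (su K), one \in su K & msupp K (su K) g].
Proof.
move=> g_c0.
have ex K : exists s : seq T, [/\ uniq s, one \in s & msupp K s g].
  have [sg Hsg] : exists sg : 'I_r -> 'I_r -> seq T, forall i j x, x \notin sg i j -> g i j x K = 0.
    exists (fun i j => proj1_sig (constructive_indefinite_description _ (proj2 (g_c0 i j) K))).
    by move=> i j x; case: constructive_indefinite_description => s /= Hs; apply: Hs.
  exists (undup (one :: flatten [seq sg i j | i <- enum 'I_r, j <- enum 'I_r])).
  split; rewrite ?undup_uniq ?mem_undup ?mem_head // => i j x.
  rewrite mem_undup inE negb_or => /andP[_ xn]; apply: Hsg; apply: contra xn => xs.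
  by apply/flattenP; exists (sg i j) => //; apply/allpairsP; exists (i, j); rewrite !mem_enum.
by exists (fun K => proj1_sig (constructive_indefinite_description _ (ex K))) => K;
  case: constructive_indefinite_description.
Qed.

Lemma oneM_supp K (s : seq T) : one \in s -> msupp K s oneG.
Proof.
move=> s1 i j x xn; rewrite /oneM.
have -> : (x == one) = false by apply: contraNF xn => /eqP->.
by rewrite andbF.
Qed.

Lemma one_sub_supp K (s : seq T) (F : mat Gam r) : one \in s -> msupp K s F ->
  msupp K s (subM p Gam r oneG F).
Proof.
move=> s1 sF i j x xn; rewrite /subM /subZp /addZp /oppZp (oneM_supp _ s1) // sF //.
by rewrite oppr0 mod0z add0r mod0z.
Qed.

Lemma one_add_scale_supp K (s : seq T) (g : mat Gam r) : one \in s -> msupp K s g ->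
  msupp K s (addM p Gam r oneG (scaleM p Gam r p g)).
Proof.
move=> s1 sg i j x xn; rewrite /addM /scaleM /addZp /mulZp (oneM_supp _ s1) // sg //.
by rewrite mulr0 mod0z add0r mod0z.
Qed.

Lemma one_sub_one_add_scale_dvd (g : mat Gam r) K i j x :
  (pk p (minn 1 K) %| subM p Gam r oneG (addM p Gam r oneG (scaleM p Gam r p g)) i j x K)%Z.
Proof.
case: K => [|K]; first by rewrite /pk dvd1z.
have pM : (pk p 1 %| pk p K.+1)%Z by apply: pk_dvd.
rewrite (minn_idPl (ltn0Sn K)) /subM /addM /subZp /addZp /oppZp modzDmr modzBmr.
rewrite opprD addrA subrr add0r; apply: dvdz_modz => //.
rewrite rpredN /scaleM /mulZp; apply: dvdz_modz => //; apply: dvdz_mulr.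
by apply: dvdz_modz => //; rewrite /pk expn1 dvdzz.
Qed.

Lemma reduce_one_sub K (N : T -> bool) (F : mat Gam r) (s : seq T) :
  uniq s -> one \in s -> msupp K s F ->
  reduces_to p K (subM p Gam r oneG F)
    (subM p (quotG T mul inv one N) r (oneM p _ r) (reduce T mul inv one N p r F)).
Proof.
move=> us s1 sF i j y cy.
rewrite /subM (reduce_coef_sub p mul inv one N y us (oneM_supp _ s1 i j) (sF i j)).
by rewrite /subZp /addZp (reduce_oneM p K one i j cy).
Qed.

End OneAddP.

Theorem proposition4p16 (p : nat) (T : countType) (mul : T -> T -> T)
  (inv : T -> T) (one : T) (Gn : nat -> T -> bool) (r : nat)
  (g : 'I_r -> 'I_r -> T -> Zpad) :
  prime p ->
  is_group mul inv one ->
  residually_finite mul inv one ->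
  (forall n, normal_fi mul inv one (Gn n)) ->
  tends_to_e one Gn ->
  (forall i j, c0Zp p (GData T predT mul inv one) (g i j)) ->
  let Gam := GData T predT mul inv one in
  let f := addM p Gam r (oneM p Gam r) (scaleM p Gam r p g) in
  padic_conv
    (fun n => logdet p (quotG T mul inv one (Gn n)) r
                     (reduce T mul inv one (Gn n) p r f))
    (logdet p Gam r f).
Proof.
move=> p_prime Hg _ HGn Gn_e g_c0 Gam f k.
have [su su_spec] := c0Zp_msupp_exists g_c0.
have su_uniq K : uniq (su K) by case: (su_spec K).
have f_supp K : msupp K (su K) f.
  by case: (su_spec K) => _ s1 sg; apply: one_add_scale_supp.
have u_supp K : msupp K (su K) (subM p Gam r (oneM p Gam r) f).
  by case: (su_spec K) => _ s1 _; apply: one_sub_supp (f_supp K).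
have u_reduce K t : reduces_to p K (subM p Gam r (oneM p Gam r) f)
    (subM p _ r (oneM p _ r) (reduce T mul inv one (Gn t) p r f)).
  by case: (su_spec K) => us s1 _; exact: (reduce_one_sub p (N := Gn t) us s1 (f_supp K)).
have [B HB] := log_terms_eventually p_prime Hg HGn Gn_e su_uniq u_supp
  (one_sub_one_add_scale_dvd p g) u_reduce k.
exists B => t tB.
rewrite /logdet /trG !big_addZpE; congr (_ %% _)%Z; apply: eq_bigr => i _.
by rewrite /logM /oppZp; congr ((- _) %% _)%Z; apply: eq_padic_series => n; apply: HB.
Qed.
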